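(* Let $L,M,N\in\mathbb N$, let $\vec B_1$ be a binary digit vector of length (scale factor) $N^L$ and $\vec B_2$ a binary digit vector of length $N^M$. If $\vec B_1\otimes\vec B_2=\vec B_2\otimes\vec B_1$, then $F_{\vec B_1}=F_{\vec B_2}$.
   Context: A binary digit vector of length (scale factor) $K\ge3$ is $\vec B=(b_0,\dots,b_{K-1})\in\{0,1\}^K$ with $2\le\|\vec B\|:=\sum_i b_i\le K-1$; its digit set is $D=\{i:b_i=1\}$. With $\phi_d(x)=(x+d)/K$ for $d\in D$, let $\mu_{\vec B}$ be the unique Borel probability measure with $\mu_{\vec B}=\frac{1}{\|\vec B\|}\sum_{d\in D}\mu_{\vec B}\circ\phi_d^{-1}$, supported on the attractor $C_{\vec B}\subset[0,1]$; the CDF is $F_{\vec B}(x)=\mu_{\vec B}([0,x])$. For binary vectors $\vec B=(b_0,\dots,b_{P-1})$ and $\vec C=(c_0,\dots,c_{Q-1})$, the Kronecker product $\vec B\otimes\vec C$ is the vector of length $PQ$ with $(\vec B\otimes\vec C)(n+mQ)=b_mc_n$ for $0\le n\le Q-1$, $0\le m\le P-1$. *)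

From HB Require Import structures.
From mathcomp Require Import all_boot all_order all_algebra.
From mathcomp Require Import all_classical all_reals all_analysis.
Set Implicit Arguments. Unset Strict Implicit. Unset Printing Implicit Defensive.
Import Order.TTheory GRing.Theory Num.Theory.
Local Open Scope classical_set_scope.
Local Open Scope ring_scope.

(* A binary digit vector of length (scale factor) K, represented as a
   sequence b_0, ..., b_{K-1} of booleans (true = digit 1). *)
Definition binary_digit_vector (K : nat) (B : seq bool) : Prop :=
  [/\ (3 <= K)%N, size B = K & (2 <= count id B <= K.-1)%N].

Definition bnorm (B : seq bool) : nat := count id B.

(* Kronecker product: (B (x) C)(n + m*Q) = b_m c_n. *)
Definition kron (B C : seq bool) : seq bool :=
  flatten [seq [seq b && c | c <- C] | b <- B].

Definition phi_map (R : realType) (K d : nat) (x : R) : R := (x + d%:R) / K%:R.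

Definition self_similar (R : realType) (B : seq bool) (mu : probability R R) : Prop :=
  forall A : set R, measurable A ->
    (mu A = ((bnorm B)%:R^-1)%:E *
           \sum_(d < size B | nth false B d) mu (@phi_map R (size B) d @^-1` A))%E.

Definition cdf_of (R : realType) (mu : probability R R) (x : R) : \bar R :=
  mu `[0, x]%classic.

From HB Require Import structures.
From mathcomp Require Import all_boot all_order all_algebra.
From mathcomp Require Import all_classical all_reals all_analysis.
From mathcomp Require Import measurable_realfun ring lra zify.
Import Order.TTheory GRing.Theory Num.Theory.
Local Open Scope classical_set_scope.
Local Open Scope ring_scope.

Set Implicit Arguments.
Unset Strict Implicit.
Unset Printing Implicit Defensive.

(* The CDF of mu_B is the only function F with values in [0, 1], vanishing on
   (-oo, 0) and equal to 1 on [1, +oo), that solves the refinement equation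
   F x = ||B||^-1 * \sum_(d in D) F (K x - d): for each x at most one K x - d
   lies in [0, 1), so the distance between two solutions shrinks by the factor
   ||B||^-1 <= 1/2 under the equation.  Solutions for B and for C solve it for
   B (x) C, hence for all Kronecker powers.  If B1 and B2 commute, so do the
   powers B1^(x)M and B2^(x)L, which both have length N^(LM); commuting vectors
   of equal length with some digit 1 are equal, so F_B1 and F_B2 solve the same
   equation.  The shape of the CDF comes from supp mu_B being in [0, 1]: by the
   self-similarity equation the mass of each tail (-oo, -t) or (1 + t, +oo) does
   not decrease with t, so by continuity from above it is 0. *)

Lemma kron_cons b B C : kron (b :: B) C = [seq b && c | c <- C] ++ kron B C.
Proof. by []. Qed.

Lemma size_kron B C : size (kron B C) = (size B * size C)%N.
Proof. by elim: B => [//|b B IH]; rewrite kron_cons size_cat size_map IH mulSn. Qed.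

Lemma bnorm_kron B C : bnorm (kron B C) = (bnorm B * bnorm C)%N.
Proof.
rewrite /bnorm; elim: B => [//|[] B IH]; rewrite kron_cons count_cat IH count_map /=.
  by rewrite (eq_count (a2 := id)).
by rewrite (eq_count (a2 := pred0)) ?count_pred0.
Qed.

Lemma nth_kron B C m n : (n < size C)%N ->
  nth false (kron B C) (n + m * size C) = nth false B m && nth false C n.
Proof.
move=> nC; elim: B m => [|b B IH] [|m]; rewrite ?nth_nil // kron_cons nth_cat size_map.
  by rewrite mul0n addn0 nC (nth_map false).
by rewrite mulSn addnCA ltnNge leq_addr /= addKn IH.
Qed.

Lemma kron1s C : kron [:: true] C = C.
Proof. by rewrite kron_cons cats0 map_id. Qed.

Lemma krons1 C : kron C [:: true] = C.
Proof. by elim: C => [//|c C IH]; rewrite kron_cons IH /= andbT. Qed.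

Lemma kron_cat A B C : kron (A ++ B) C = kron A C ++ kron B C.
Proof. by rewrite /kron map_cat flatten_cat. Qed.

Lemma kron_map_andb a B C : kron (map (andb a) B) C = map (andb a) (kron B C).
Proof.
elim: B => [//|b B IH]; rewrite /= !kron_cons IH map_cat -map_comp.
by congr (_ ++ _); apply: eq_map => c /=; rewrite andbA.
Qed.

Lemma kronA A B C : kron (kron A B) C = kron A (kron B C).
Proof. by elim: A => [//|a A IH]; rewrite !kron_cons kron_cat IH kron_map_andb. Qed.

Fixpoint kron_pow (B : seq bool) (k : nat) : seq bool :=
  if k is k'.+1 then kron B (kron_pow B k') else [:: true].

Lemma size_kron_pow B k : size (kron_pow B k) = (size B ^ k)%N.
Proof. by elim: k => [//|k IH]; rewrite /= size_kron IH expnS. Qed.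

Lemma bnorm_kron_pow B k : bnorm (kron_pow B k) = (bnorm B ^ k)%N.
Proof. by elim: k => [//|k IH]; rewrite /= bnorm_kron IH expnS. Qed.

Lemma kron_pow_comm A B k : kron A B = kron B A ->
  kron A (kron_pow B k) = kron (kron_pow B k) A.
Proof.
move=> AB; elim: k => [|k IH] /=; first by rewrite kron1s krons1.
by rewrite -kronA AB kronA IH kronA.
Qed.

Lemma kron_comm_eq X Y : size X = size Y -> (0 < bnorm X)%N ->
  (0 < bnorm Y)%N -> kron X Y = kron Y X -> X = Y.
Proof.
move=> sXY; rewrite /bnorm -!has_count => /(has_nthP false) [j jX Xj].
move=> /(has_nthP false) [k kY Yk] XY.
have XYm m n : (n < size X)%N ->
    nth false X m && nth false Y n = nth false Y m && nth false X n.
  by move=> nX; rewrite -(nth_kron X m) -?sXY // XY nth_kron.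
apply: (@eq_from_nth _ false) => // i iX; apply/idP/idP => h.
  by have := XYm i k; rewrite sXY h Yk => /(_ kY) /esym /andP [].
by have := XYm i j jX; rewrite h Xj => /andP [].
Qed.

Lemma kron_pow_eq_of_comm A B m n : kron A B = kron B A ->
  (size A ^ m = size B ^ n)%N -> (0 < bnorm A)%N -> (0 < bnorm B)%N ->
  kron_pow A m = kron_pow B n.
Proof.
move=> AB sAB cA cB; apply: kron_comm_eq.
- by rewrite !size_kron_pow.
- by rewrite bnorm_kron_pow expn_gt0 cA.
- by rewrite bnorm_kron_pow expn_gt0 cB.
- by apply/esym/kron_pow_comm/esym/kron_pow_comm.
Qed.

Lemma big_nat_mul_split (T : Type) (idx : T) (op : Monoid.law idx) P Q h :
  \big[op/idx]_(0 <= j < P * Q) h j =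
  \big[op/idx]_(0 <= m < P) \big[op/idx]_(0 <= n < Q) h (n + m * Q)%N.
Proof.
rewrite big_nat_mul; apply: eq_bigr => m _.
by rewrite -{1}[(m * Q)%N]add0n big_addn mulSn addnK.
Qed.

Section Refinable.
Variable R : realType.

Lemma sum_digits_const (B : seq bool) (x : R) :
  \sum_(0 <= d < size B | nth false B d) x = x *+ bnorm B.
Proof.
rewrite big_const_seq iter_addr_0 /bnorm -[in RHS](mkseq_nth false B).
by rewrite /mkseq count_map /index_iota subn0.
Qed.

Lemma norm_sum_single_support (I : eqType) (r : seq I) (P : pred I) (h : I -> R) e :
  uniq r -> (forall i j, h i != 0 -> h j != 0 -> i = j) ->
  (forall i, `|h i| <= e) -> 0 <= e -> `|\sum_(i <- r | P i) h i| <= e.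
Proof.
move=> + hij he e0; elim: r => [|a r IH]; first by rewrite big_nil normr0.
rewrite /= => /andP [ar ur]; rewrite big_cons.
case: (boolP (P a && (h a != 0))) => [/andP [-> ha]|].
  rewrite big1_seq ?addr0 // => j /andP [_ jr].
  by apply/eqP; apply: contraNT ar => hj; rewrite (hij _ _ ha hj).
by case: (P a) => //=; rewrite ?IH // negbK => /eqP ->; rewrite add0r IH.
Qed.

Definition refinable (B : seq bool) (F : R -> R) := forall x : R,
  F x = (bnorm B)%:R^-1 *
    \sum_(0 <= d < size B | nth false B d) F ((size B)%:R * x - d%:R).

Definition cdf01 (F : R -> R) :=
  [/\ forall x, 0 <= F x <= 1, forall x, x < 0 -> F x = 0
    & forall x, 1 <= x -> F x = 1].

Lemma refinable1 F : refinable [:: true] F.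
Proof.
by move=> x; rewrite /bnorm /= big_mkcond big_nat1 /= invr1 !mul1r subr0.
Qed.

Lemma refinable_kron B C F :
  refinable B F -> refinable C F -> refinable (kron B C) F.
Proof.
move=> FB FC x; rewrite FB bnorm_kron natrM invfM size_kron -mulrA.
congr (_ * _); rewrite mulr_sumr big_mkcond [RHS]big_mkcond /= big_nat_mul_split.
apply: eq_bigr => m _; case: ifP => Bm /=; last first.
  rewrite big1_seq // => n; rewrite mem_index_iota => /andP [_ nC].
  by rewrite nth_kron ?Bm.
rewrite FC mulr_sumr big_mkcond; apply: eq_big_nat => n /andP [_ nC].
rewrite nth_kron // Bm; case: ifP => // _.
by congr (_ * F _); rewrite !natrD !natrM; ring.
Qed.

Lemma refinable_kron_pow B F k : refinable B F -> refinable (kron_pow B k) F.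
Proof.
by move=> FB; elim: k => [|k IH] /=; [exact: refinable1 | exact: refinable_kron].
Qed.

Lemma cdf01_diff_support {F1 F2} : cdf01 F1 -> cdf01 F2 -> forall y,
  F1 y - F2 y != 0 -> 0 <= y < 1.
Proof.
move=> [_ l1 u1] [_ l2 u2] y y12; apply/andP; split;
  [rewrite leNgt | rewrite ltNge]; apply: contra y12.
  by move=> y0; rewrite l1 ?l2 ?subrr.
by move=> y1; rewrite u1 ?u2 ?subrr.
Qed.

Lemma refinable_cdf01_contract B F1 F2 n x :
  cdf01 F1 -> cdf01 F2 -> refinable B F1 -> refinable B F2 ->
  `|F1 x - F2 x| <= ((bnorm B)%:R ^+ n)^-1.
Proof.
move=> C1 C2 E1 E2; elim: n x => [|n IH] x.
  case: C1 C2 => [b1 _ _] [b2 _ _]; move: (b1 x) (b2 x).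
  by rewrite expr0 invr1 ler_norml => /andP [? ?] /andP [? ?]; apply/andP; split; lra.
rewrite E1 E2 -mulrBr -sumrB normrM exprS invfM ger0_norm ?invr_ge0 //.
apply: ler_wpM2l; first by rewrite invr_ge0.
apply: norm_sum_single_support => //; first exact: iota_uniq.
move=> i j /(cdf01_diff_support C1 C2) /andP [i0 i1].
move=> /(cdf01_diff_support C1 C2) /andP [j0 j1].
have le_nat (k l : nat) : (k%:R : R) < l%:R + 1 -> (k <= l)%N.
  by rewrite natr1 ltr_nat ltnS.
by apply/eqP; rewrite eqn_leq !le_nat //; lra.
Qed.

Lemma geometric_bound_eq0 (k : nat) (y : R) :
  (1 < k)%N -> (forall n, `|y| <= (k%:R ^+ n)^-1) -> y = 0.
Proof.
move=> k1 yk; apply/eqP; rewrite -normr_eq0; apply/negPn/negP => y0.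
have gy : 0 < `|y| by rewrite lt_def y0 normr_ge0.
have := archi_boundP (ltW (_ : 0 < `|y|^-1)); rewrite invr_gt0 => /(_ gy).
set n := Num.bound _ => yn.
have kn : (n%:R : R) < k%:R ^+ n by rewrite -natrX ltr_nat ltn_expl.
have k0 : 0 < k%:R :> R by rewrite ltr0n ltnW.
have : (k%:R ^+ n)^-1 < `|y|.
  by rewrite -[ltRHS]invrK ltf_pV2 ?posrE ?exprn_gt0 ?invr_gt0 //; lra.
by rewrite ltNge yk.
Qed.

Lemma refinable_cdf01_uniq B F1 F2 : (1 < bnorm B)%N ->
  cdf01 F1 -> cdf01 F2 -> refinable B F1 -> refinable B F2 -> F1 =1 F2.
Proof.
move=> c1 C1 C2 E1 E2 x; apply/subr0_eq/(geometric_bound_eq0 c1) => n.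
exact: refinable_cdf01_contract.
Qed.

Lemma refinable_tail_const B (s : R -> R) (g : R -> nat -> R) (d0 : nat) :
  (1 < bnorm B)%N -> (forall u v, u <= v -> s v <= s u) ->
  (forall t, 0 <= t -> s t = (bnorm B)%:R^-1 *
     \sum_(0 <= d < size B | nth false B d) s (g t d)) ->
  (forall t d, 0 <= t -> (d < size B)%N -> t + (d != d0)%:R <= g t d) ->
  forall n : nat, s n%:R = s 0.
Proof.
move=> c1 mono E gt.
set c : R := (bnorm B)%:R; have c1R : 1 < c by rewrite (ltr_nat R 1).
(* Every digit but d0 sends t beyond t + 1, and s t is the average of the
   values at the image points. *)
have step t : 0 <= t -> s t <= s (t + 1).
  move=> t0; set a := s t; set b := s (t + 1).
  have ba : b <= a by apply: mono; lra.
  pose h d := (a - b) *+ (d == d0).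
  have sum_le : \sum_(0 <= d < size B | nth false B d) s (g t d) <=
                \sum_(0 <= d < size B | nth false B d) (b + h d).
    rewrite big_seq_cond [leRHS]big_seq_cond; apply: ler_sum => d.
    rewrite mem_index_iota => /andP [/andP [_ dK] _]; have := gt t d t0 dK.
    rewrite /h; case: eqP => _ /= gtd; last by rewrite addr0; apply: mono; lra.
    by rewrite mulr1n addrC subrK; apply: mono; lra.
  have sum_h : \sum_(0 <= d < size B | nth false B d) h d <= a - b.
    apply: le_trans (ler_norm _) _; apply: norm_sum_single_support.
    - exact: iota_uniq.
    - move=> i j; rewrite /h; case: (i =P d0) => [->|]; last by rewrite eqxx.
      by case: (j =P d0) => [->|]; last by rewrite eqxx.
    - by move=> i; rewrite /h; case: eqP => _; rewrite ?mulr1n ?normr0 ?ger0_norm; lra.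
    - lra.
  have sum_eq : \sum_(0 <= d < size B | nth false B d) s (g t d) = c * a.
    by rewrite /a (E t t0) -/c mulVKf // gt_eqF // (lt_trans ltr01 c1R).
  move: sum_le; rewrite sum_eq big_split /= sum_digits_const -mulr_natr -/c.
  nra.
elim=> [//|n IH]; apply/le_anti; rewrite mono ?ler0n //= -IH.
by rewrite -natr1 step ?ler0n.
Qed.

End Refinable.

Lemma measure_bigcap_const d (T : measurableType d) (R : realType)
    (mu : {measure set T -> \bar R}) (F : (set T)^nat) :
  (mu (F 0%N) < +oo)%E -> (forall n, measurable (F n)) ->
  {homo F : n m / (n <= m)%N >-> (m <= n)%O} ->
  (forall n, mu (F n) = mu (F 0%N)) -> mu (F 0%N) = mu (\bigcap_n F n).
Proof.
move=> F0 mF homF muF; have muFE : mu \o F = cst (mu (F 0%N)) by apply/funext.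
have := nonincreasing_cvg_mu F0 mF (bigcap_measurableType (fun n _ => mF n)) homF.
by rewrite muFE => /(cvg_lim (@ereal_hausdorff R)) <-; rewrite lim_cst.
Qed.

Lemma measurable_phi_map (R : realType) K d (A : set R) :
  measurable A -> measurable (phi_map K d @^-1` A).
Proof.
move=> mA; rewrite -[_ @^-1` _]setTI; apply: (_ : measurable_fun setT _) => //.
by apply: measurable_funM => //; apply: measurable_funD.
Qed.

Section PhiPreimage.
Variables (R : realType) (K d : nat).
Hypothesis K0 : (0 < K)%N.

Let K0R : 0 < K%:R :> R. Proof. by rewrite ltr0n. Qed.

Lemma phi_map_preimage_itvNy (t : R) :
  phi_map K d @^-1` `]-oo, t[%classic = `]-oo, K%:R * t - d%:R[%classic.
Proof.
by apply/seteqP; split => y; rewrite /= !in_itv /= /phi_map ltr_pdivrMr //; lra.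
Qed.

Lemma phi_map_preimage_itvy (t : R) :
  phi_map K d @^-1` `]t, +oo[%classic = `]K%:R * t - d%:R, +oo[%classic.
Proof.
by apply/seteqP; split => y; rewrite /= !in_itv /= /phi_map !andbT ltr_pdivlMr //; lra.
Qed.

Lemma phi_map_preimage_itvcc (a b : R) :
  phi_map K d @^-1` `[a, b]%classic = `[K%:R * a - d%:R, K%:R * b - d%:R]%classic.
Proof.
apply/seteqP; split => y;
  by rewrite /= !in_itv /= /phi_map ler_pdivlMr // ler_pdivrMr //; lra.
Qed.

End PhiPreimage.

Section SelfSimilarMeasure.
Variables (R : realType) (B : seq bool) (mu : probability R R).
Hypotheses (B2 : (1 < bnorm B)%N) (muB : self_similar B mu).

Local Notation K := (size B).

Let K0 : (0 < K)%N.
Proof. by apply: leq_trans (count_size id B); apply: ltnW. Qed.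

Let muE A : measurable A -> mu A = (fine (mu A))%:E.
Proof. by move=> mA; rewrite fineK // fin_num_measure. Qed.

Let fine_mu_le A A' : measurable A -> measurable A' -> A `<=` A' ->
  fine (mu A) <= fine (mu A').
Proof.
move=> mA mA' AA'; rewrite -lee_fin -!muE //.
by apply: le_measure => //; rewrite inE.
Qed.

Lemma self_similar_fine A : measurable A ->
  fine (mu A) = (bnorm B)%:R^-1 *
    \sum_(0 <= d < K | nth false B d) fine (mu (phi_map K d @^-1` A)).
Proof.
move=> mA; rewrite big_mkord; apply: EFin_inj; rewrite EFinM -sumEFin -!muE //.
rewrite (eq_bigr (fun d : 'I_K => mu (phi_map K d @^-1` A))); first exact: muB.
by move=> d _; rewrite -muE //; exact: measurable_phi_map.
Qed.

Lemma self_similar_tail_null (T : R -> set R) (g : R -> nat -> R) (d0 : nat) :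
  (forall t, measurable (T t)) -> (forall u v, u <= v -> T v `<=` T u) ->
  \bigcap_n T n%:R = set0 ->
  (forall t d, phi_map K d @^-1` T t = T (g t d)) ->
  (forall t d, 0 <= t -> (d < K)%N -> t + (d != d0)%:R <= g t d) ->
  mu (T 0) = 0%E.
Proof.
move=> mT antiT capT preT gt.
have s_const (n : nat) : fine (mu (T n%:R)) = fine (mu (T 0)).
  apply: (@refinable_tail_const R B (fun t => fine (mu (T t))) g d0 B2) gt n.
    by move=> u v uv; exact: fine_mu_le (antiT _ _ uv).
  move=> t _; rewrite (self_similar_fine (mT t)).
  by under eq_bigr => d _ do rewrite preT.
have := @measure_bigcap_const _ _ _ mu (fun n => T n%:R).
rewrite capT measure0 mulr0n; apply.
- exact: le_lt_trans (probability_le1 mu (mT 0)) (ltry 1).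
- by move=> n; exact: mT.
- by move=> n k nk; apply/subsetPset/antiT; rewrite ler_nat.
- by move=> n; have := congr1 EFin (s_const n); rewrite -!muE.
Qed.

Lemma self_similar_itvNy0 : mu `]-oo, 0[%classic = 0%E.
Proof.
have := @self_similar_tail_null (fun t => `]-oo, - t[%classic)
  (fun t d => K%:R * t + d%:R) 0%N.
rewrite oppr0; apply.
- by move=> t; exact: measurable_itv.
- by move=> u v uv y; rewrite /= !in_itv /=; lra.
- apply/seteqP; split => // y /= yT.
  have := archi_boundP (normr_ge0 y); have := yT (Num.bound `|y|) I.
  by rewrite /= in_itv /=; have := ler_norm (- y); rewrite normrN; lra.
- by move=> t d; rewrite phi_map_preimage_itvNy // mulrN opprD.
- move=> t d t0 _; have K1 : 1 <= K%:R :> R by rewrite (ler_nat R 1).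
  have : (d != 0)%:R <= d%:R :> R by rewrite ler_nat; case: d.
  nra.
Qed.

Lemma self_similar_itvy0 : mu `]1, +oo[%classic = 0%E.
Proof.
have := @self_similar_tail_null (fun t => `]1 + t, +oo[%classic)
  (fun t d => K%:R * (1 + t) - d%:R - 1) K.-1.
rewrite addr0; apply.
- by move=> t; exact: measurable_itv.
- by move=> u v uv y; rewrite /= !in_itv /= !andbT; lra.
- apply/seteqP; split => // y /= yT.
  have := archi_boundP (normr_ge0 y); have := yT (Num.bound `|y|) I.
  by rewrite /= in_itv /= andbT; have := ler_norm y; lra.
- by move=> t d; rewrite phi_map_preimage_itvy // [1 + (_ - 1)]addrC subrK.
- move=> t d t0 dK; have K1 : 1 <= K%:R :> R by rewrite (ler_nat R 1).
  have : ((d != K.-1) + d.+1 <= K)%N by case: eqP; lia.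
  rewrite -(ler_nat R) natrD -natr1; nra.
Qed.

Lemma self_similar_setI01 A : measurable A -> mu A = mu (A `&` `[0, 1]%classic).
Proof.
move=> mA; rewrite (measureDI mu mA (measurable_itv `[0, 1])) /=.
suff -> : mu (A `\` `[0, 1]%classic) = 0%E by rewrite add0e.
apply: (@subset_measure0 _ _ _ mu _ (`]-oo, 0[ `|` `]1, +oo[)%classic).
- by apply: measurableD => //; exact: measurable_itv.
- by apply: measurableU; exact: measurable_itv.
- move=> y [_] /=; rewrite !in_itv /= andbT => y01.
  have [y0|y0] := ltP y 0; [by left | right].
  by rewrite ltNge; apply/negP => y1; apply: y01; rewrite y0 y1.
- apply: (null_set_setU (mu := mu)) => //.
    exact: self_similar_itvNy0.
  exact: self_similar_itvy0.
Qed.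

Lemma self_similar_cdf01 : cdf01 (fun x => fine (mu `[0, x]%classic)).
Proof.
split => x.
- by rewrite fine_ge0 ?measure_ge0 //= -lee_fin -muE ?probability_le1 //;
    exact: measurable_itv.
- move=> x0; rewrite (_ : `[0, x]%classic = set0) ?measure0 //.
  by apply/seteqP; split => // y /=; rewrite in_itv /=; lra.
- move=> x1; rewrite self_similar_setI01; last exact: measurable_itv.
  rewrite (_ : _ `&` _ = `[0, 1]%classic); last first.
    by apply/seteqP; split => y /=; rewrite !in_itv /=; [case | split]; lra.
  by have := self_similar_setI01 measurableT; rewrite setTI probability_setT => <-.
Qed.

Lemma self_similar_refinable : refinable B (fun x => fine (mu `[0, x]%classic)).
Proof.
move=> x; rewrite self_similar_fine; last exact: measurable_itv.
congr (_ * _); apply: eq_bigr => d _; rewrite phi_map_preimage_itvcc // mulr0 sub0r.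
rewrite self_similar_setI01; last exact: measurable_itv.
rewrite [X in mu X](_ : _ = `[0, K%:R * x - d%:R] `&` `[0, 1])%classic; last first.
  have := ler0n R d => d0; apply/seteqP; split => y /=; rewrite !in_itv /=.
    by move=> [/andP [? ?] /andP [? ?]]; split; apply/andP; split; lra.
  by move=> [/andP [? ?] /andP [? ?]]; split; apply/andP; split; lra.
by rewrite -self_similar_setI01 //; exact: measurable_itv.
Qed.

End SelfSimilarMeasure.

Lemma cdf_ofE (R : realType) (mu : probability R R) x :
  cdf_of mu x = (fine (mu `[0, x]%classic))%:E.
Proof. by rewrite fineK // fin_num_measure //; exact: measurable_itv. Qed.

Theorem lemma2p8 (R : realType) (L M N : nat) (B1 B2 : seq bool)
  (mu1 mu2 : probability R R) :
  binary_digit_vector (N ^ L) B1 ->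
  binary_digit_vector (N ^ M) B2 ->
  self_similar B1 mu1 -> self_similar B2 mu2 ->
  kron B1 B2 = kron B2 B1 ->
  cdf_of mu1 = cdf_of mu2.
Proof.
move=> [_ sB1 /andP [c1 _]] [N3M sB2 /andP [c2 _]] mu1B1 mu2B2 B12.
have M0 : M != 0%N by apply: contraTneq N3M => ->.
have B1M_B2L : kron_pow B1 M = kron_pow B2 L.
  by apply: kron_pow_eq_of_comm; rewrite ?(ltnW c1) ?(ltnW c2) // sB1 sB2 -!expnM mulnC.
have cX : (1 < bnorm (kron_pow B1 M))%N.
  rewrite bnorm_kron_pow -(prednK (_ : (0 < M)%N)) ?lt0n // expnS (leq_trans c1) //.
  by rewrite leq_pmulr // expn_gt0 (ltnW c1).
have F1 := refinable_kron_pow M (self_similar_refinable c1 mu1B1).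
have F2 := refinable_kron_pow L (self_similar_refinable c2 mu2B2).
rewrite B1M_B2L in F1 cX.
have C1 := self_similar_cdf01 c1 mu1B1; have C2 := self_similar_cdf01 c2 mu2B2.
by apply/funext => x; rewrite !cdf_ofE (refinable_cdf01_uniq cX C1 C2 F1 F2).
Qed.
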